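(* Let $C_\infty=(\mathbb{N},+)$ and let $\mathcal{A}$ be an $\mathbb{H}C_\infty$-module. For every integer $r\ge3$ there is a natural isomorphism $H^{r+2}(C_\infty,r;\mathcal{A})\cong\{a\in\mathcal{A}(2) : 2a=0\}$.
   Context: General setting (for a commutative monoid $M$ with identity $e$, written multiplicatively; for $C_\infty$ read $xy$ as $x+y$, $e$ as $0$): $\mathbb{H}M$ has objects the elements of $M$ and morphisms $(x,y):x\to xy$, composition $(xy,z)(x,y)=(x,yz)$. An $\mathbb{H}M$-module $\mathcal{A}$ is a functor $\mathbb{H}M\to\mathbf{Ab}$: groups $\mathcal{A}(x)$ with $y_*:\mathcal{A}(x)\to\mathcal{A}(xy)$, $y_*z_*=(yz)_*$, $e_*=\mathrm{id}$. Tensor product $(\mathcal{A}\otimes_{\mathbb{H}M}\mathcal{B})(x)=\bigoplus_{zt=x}\mathcal{A}(z)\otimes\mathcal{B}(t)/(u_*a\otimes b=a\otimes u_*b)$; unit the constant module $\mathbb{Z}$; chain complexes of $\mathbb{H}M$-modules form a symmetric monoidal category with Koszul signs. A commutative DGA-algebra over $\mathbb{H}M$ is a commutative monoid $(\mathcal{A},\circ,\iota)$ there with a monoid morphism $\epsilon:\mathcal{A}\to\mathbb{Z}$, $\epsilon_x(a)=\tilde\epsilon(a)x$. Its reduced bar construction $\mathbf{B}(\mathcal{A})$ has $\mathbf{B}(\mathcal{A})_n(x)$ generated by $[\,]$ (degree $0$) and $[a_1|\cdots|a_p]$ with $a_i\in(\mathrm{coker}\,\iota)_{r_i}(x_i)$,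 $x_1\cdots x_p=x$, $p+\sum r_i=n$; differential $\partial[a_1|\cdots|a_p]=-\sum_i(-1)^{e_{i-1}}[\cdots|\partial a_i|\cdots]+\tilde\epsilon(a_1)x_{1*}[a_2|\cdots]+\sum_{i<p}(-1)^{e_i}[\cdots|a_i\circ a_{i+1}|\cdots]+(-1)^{e_p}\tilde\epsilon(a_p)x_{p*}[\cdots|a_{p-1}]$, $e_i=i+r_1+\cdots+r_i$; multiplication the signed shuffle product $[a_1|\cdots|a_p]\circ[a_{p+1}|\cdots|a_{p+q}]=\sum_\sigma(-1)^{e(\sigma)}[a_{\sigma^{-1}(1)}|\cdots|a_{\sigma^{-1}(p+q)}]$, $e(\sigma)=\sum_{\sigma(i)>\sigma(p+j)}(1+r_i)(1+r_{p+j})$; unit $[\,]$; augmentation $\mathbf{B}(\mathcal{A})_0\cong\mathbb{Z}$. It is again such an algebra, so $\mathbf{B}^r$ is defined. $\mathcal{Z}M$: $\mathcal{Z}M(x)$ free abelian on $\{(u,v):uv=x\}$, $y_*(u,v)=(yu,v)$, $(u,v)\circ(w,t)=(uw,vt)$, unit $(e,e)$, degree $0$, augmentation $(u,v)\mapsto$ generator of $\mathbb{Z}(x)$. $H^n(M,r;\mathcal{A})=H^n(\mathrm{Hom}_{\mathbb{H}M}(\mathbf{B}^r(\mathcal{Z}M),\mathcal{A}))$. *)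

From mathcomp Require Import all_boot all_order all_algebra.
Set Implicit Arguments. Unset Strict Implicit. Unset Printing Implicit Defensive.
Import GRing.Theory.
Local Open Scope ring_scope.

(* H C_oo - modules, C_oo = (nat,+), e = 0.                            *)
(* A module is a family of abelian groups A(x), x : nat, with additive *)
(* maps y_* : A(x) -> A(x+y), y_* z_* = (y z)_*, e_* = id.             *)

Definition tr (A : nat -> zmodType) (x z : nat) (a : A x) : A z :=
  match x =P z with
  | ReflectT e => eq_rect x (fun n => A n : Type) a z e
  | ReflectF _ => 0
  end.
Arguments tr : clear implicits.

Unset Implicit Arguments.
Record HMod := {
  Mod : nat -> zmodType;
  act : forall x y : nat, Mod x -> Mod (x + y)%N;
  actB : forall x y (a b : Mod x), act x y (a - b) = act x y a - act x y b;
  act0 : forall x (a : Mod x), tr Mod (x + 0)%N x (act x 0 a) = a;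
  actM : forall x y z (a : Mod x),
      act (x + y)%N z (act x y a) = tr Mod (x + (y + z))%N (x + y + z)%N (act x (y + z) a)
}.
Set Implicit Arguments.

Definition hmorph (A B : HMod) (phi : forall x, Mod A x -> Mod B x) : Prop :=
  (forall x (a b : Mod A x), phi x (a - b) = phi x a - phi x b) /\
  (forall x y (a : Mod A x), phi (x + y)%N (act A x y a) = act B x y (phi x a)).

(* Commutative DGA-algebras over H C_oo that are FREE as H C_oo-modules*)
(* on a given basis, each basis element b generating a copy of the     *)
(* representable module at its weight wt b (i.e. an element b of      *)
(* A(wt b) with y_* b in A(wt b + y)), in homological degree deg b.    *)
(*   ok b    : b is a genuine basis element (basis = {b | ok b})        *)
(*   isu b   : b is the unit basis element iota(1) (weight 0, degree 0) *)
(*   dif b   : the differential of b, as a formal Z-combination of      *)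
(*             basis elements b', each implicitly shifted by            *)
(*             (wt b - wt b')_*                                          *)
(*   mul b c : the product b o c, in the same format (weight wt b+wt c) *)
Unset Implicit Arguments.
Record BAlg := {
  bas : Type;
  ok : bas -> bool;
  isu : bas -> bool;
  wt : bas -> nat;
  deg : bas -> nat;
  aug : bas -> int;
  dif : bas -> seq (int * bas);
  mul : bas -> bas -> seq (int * bas)
}.
Set Implicit Arguments.

(* The algebra Z M for M = C_oo : Z M(x) is free on the (u,v), u+v = x, *)
(* and (u,v) = u_*(0,v); so Z M is free on the g_v := (0,v), v : nat,  *)
(* g_v of weight v, degree 0; unit g_0 = (e,e); g_v o g_w = g_(v+w);   *)
(* augmentation eps~(g_v) = 1; zero differential.                       *)
Definition ZMalg : BAlg :=
  {| bas := nat;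
     ok := fun _ => true;
     isu := fun v => v == 0%N;
     wt := fun v => v;
     deg := fun _ => 0%N;
     aug := fun _ => 1;
     dif := fun _ => [::];
     mul := fun v w => [:: (1, (v + w)%N)] |}.

Section Bar.
Variable L : BAlg.
Let T := bas L.

Fixpoint splits (s : seq T) : seq (seq T * T * seq T) :=
  if s is a :: t then
    ([::], a, t) :: [seq (a :: x.1.1, x.1.2, x.2) | x <- splits t]
  else [::].

Fixpoint splits2 (s : seq T) : seq (seq T * T * T * seq T) :=
  match s with
  | a :: ((b :: t) as u) =>
      ([::], a, b, t) :: [seq (a :: x.1.1.1, x.1.1.2, x.1.2, x.2) | x <- splits2 u]
  | _ => [::]
  end.

(* e_i for the prefix [a_1|...|a_i] : e_i = i + r_1 + ... + r_i *)
Definition epre (pre : seq T) : nat := (size pre + sumn (map (deg L) pre))%N.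

Definition sgn (n : nat) : int := (-1) ^+ n.

(* keep only the terms which are nonzero in coker iota *)
Definition nonunit (l : seq (int * T)) := [seq x <- l | ~~ isu L x.2].

Definition bar_dif (s : seq T) : seq (int * seq T) :=
  (* - sum_i (-1)^(e_(i-1)) [ ... | d a_i | ... ] *)
  flatten [seq [seq (- (sgn (epre x.1.1)) * c.1, x.1.1 ++ c.2 :: x.2)
               | c <- nonunit (dif L x.1.2)] | x <- splits s]
  (* + eps~(a_1) x_1* [a_2|...|a_p] *)
  ++ (if s is a :: t then [:: (aug L a, t)] else [::])
  (* + sum_(i<p) (-1)^(e_i) [ ... | a_i o a_(i+1) | ... ] *)
  ++ flatten [seq [seq (sgn (epre (rcons x.1.1.1 x.1.1.2)) * c.1,
                        x.1.1.1 ++ c.2 :: x.2)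
               | c <- nonunit (mul L x.1.1.2 x.1.2)] | x <- splits2 s]
  (* + (-1)^(e_p) eps~(a_p) x_p* [a_1|...|a_(p-1)] *)
  ++ (if rev s is a :: t then [:: (sgn (epre s) * aug L a, rev t)] else [::]).

(* signed shuffle product:  sum over (p,q)-shuffles sigma of
   (-1)^(e(sigma)) [a_(sigma^-1 1)| ... ], e(sigma) = sum over pairs
   (i in first block, j in second block) with sigma(i) > sigma(p+j) of
   (1 + r_i)(1 + r_(p+j)). *)
Fixpoint shuffle (s : seq T) : seq T -> seq (int * seq T) :=
  match s with
  | [::] => fun t => [:: (1, t)]
  | a :: s' =>
      fix shuffle_t (t : seq T) : seq (int * seq T) :=
        match t with
        | [::] => [:: (1, a :: s')]
        | b :: t' =>
            [seq (x.1, a :: x.2) | x <- shuffle s' t]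
            ++ [seq (sgn ((1 + deg L b) * sumn [seq (1 + deg L y)%N | y <- a :: s'])
                     * x.1, b :: x.2) | x <- shuffle_t t']
        end
  end.

(* The reduced bar construction B(L): free on the [a_1|...|a_p] with    *)
(* a_i non-unit basis elements of L (= basis of coker iota), p >= 0.    *)
Definition bar : BAlg :=
  {| bas := seq T;
     ok := fun s => all (fun b => ok L b && ~~ isu L b) s;
     isu := fun s => nilp s;
     wt := fun s => sumn (map (wt L) s);
     deg := fun s => (size s + sumn (map (deg L) s))%N;
     aug := fun s => if s is [::] then 1 else 0;
     dif := bar_dif;
     mul := shuffle |}.

End Bar.

Definition BrZ (r : nat) : BAlg := iter r bar ZMalg.

(* The cochain complex Hom_{H M}(B, A): a homomorphism from the free    *)
(* module on the degree-n basis elements is (by Yoneda) a family of     *)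
(* values f b in A(wt b).                                               *)
Section Cochains.
Variables (L : BAlg) (A : HMod).

Definition cbas (n : nat) := {b : bas L | ok L b && (deg L b == n)}.

Definition cochain (n : nat) := forall b : cbas n, Mod A (wt L (sval b)).

Definition evalc n (f : cochain n) (b' : bas L) (z : nat) : Mod A z :=
  match @insub _ (fun b => ok L b && (deg L b == n)) _ b' with
  | Some bb => tr (Mod A) _ z (act A (wt L (sval bb)) (z - wt L (sval bb))%N (f bb))
  | None => 0
  end.

Definition cobound n (f : cochain n) : cochain n.+1 :=
  fun b => \sum_(c <- dif L (sval b)) (evalc f c.2 (wt L (sval b)) *~ c.1).

Definition is_cocycle n (f : cochain n) : Prop := forall b, cobound f b = 0.

Definition is_coboundary n (f : cochain n.+1) : Prop :=
  exists g : cochain n, forall b, f b = cobound g b.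

Definition addc n (f g : cochain n) : cochain n := fun b => f b + g b.

End Cochains.

Definition mapc (L : BAlg) (A B : HMod) (phi : forall x, Mod A x -> Mod B x) n
  (f : cochain L A n) : cochain L B n := fun b => phi _ (f b).

(* For [r >= 3] an element of [B^(r+1)(Z)] of degree at most [2r + 1] is a single
   letter [[x]], and the differential of [[x]] is [-[dx]] up to terms on the empty
   word.  So desuspension [f |-> (x |-> f [x])] identifies cocycles and coboundaries
   of [Hom(B^(r+1)(Z), A)] in degree [r + 3] with those of [Hom(B^r(Z), A)] in degree
   [r + 2], and the theorem reduces to [r = 3].  There degree 5 is spanned by the
   [[[[a|b|c]]]] and the [[[[a]|[b]]]].  On the former a cocycle [f] is the coboundary
   of the primitive [(a, b) |-> - sum_(0 < k < a) f [[[1|k|b]]]]; what remains of [f]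
   on the latter is biadditive by the cocycle condition, and antisymmetric because of
   the two-letter words [[[[a]] | [[b]]]].  Hence [f] is determined up to coboundaries
   by [f [[[1]|[1]]]] in [A(2)], which is killed by 2. *)

From HB Require Import structures.
From mathcomp Require Import all_boot all_order all_algebra zify.
From Stdlib Require Import FunctionalExtensionality.
Set Implicit Arguments. Unset Strict Implicit. Unset Printing Implicit Defensive.
Import GRing.Theory.
Local Open Scope ring_scope.

Section Transport.
Variable A : HMod.
Implicit Types x y z : nat.

Lemma tr_id x (a : Mod A x) : tr (Mod A) x x a = a.
Proof. by rewrite /tr; case: eqP => // e; rewrite (eq_irrelevance e erefl). Qed.

Lemma tr_neq x z (a : Mod A x) : x <> z -> tr (Mod A) x z a = 0.
Proof. by rewrite /tr; case: eqP. Qed.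

Lemma tr_trans x y z (a : Mod A x) : x = y -> tr (Mod A) y z (tr (Mod A) x y a) = tr (Mod A) x z a.
Proof. by move=> <-; rewrite tr_id. Qed.

Lemma trB x z : zmod_morphism (tr (Mod A) x z).
Proof.
move=> a b; case: (x =P z) => [<-|ne]; first by rewrite !tr_id.
by rewrite !tr_neq // subrr.
Qed.

Lemma act_tr x y k (a : Mod A x) :
  x = y -> act A y k (tr (Mod A) x y a) = tr (Mod A) (x + k)%N (y + k)%N (act A x k a).
Proof. by move=> <-; rewrite !tr_id. Qed.

(* [push x z a] is [(z - x)_* a] in [A(z)], and [0] when [z < x]. *)
Definition push x z (a : Mod A x) : Mod A z :=
  tr (Mod A) (x + (z - x))%N z (act A x (z - x)%N a).
Arguments push : clear implicits.

Lemma pushB x z : zmod_morphism (push x z).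
Proof. by move=> a b; rewrite /push actB trB. Qed.

Lemma push_id x (a : Mod A x) : push x x a = a.
Proof. by rewrite /push subnn act0. Qed.

Lemma push_lt x z (a : Mod A x) : (z < x)%N -> push x z a = 0.
Proof. by move=> lt_zx; rewrite /push tr_neq //; lia. Qed.

Lemma push_comp x y z (a : Mod A x) :
  (x <= y)%N -> (y <= z)%N -> push y z (push x y a) = push x z a.
Proof.
move=> le_xy le_yz; rewrite /push act_tr; last lia.
rewrite tr_trans; last lia.
rewrite actM tr_trans; last lia.
by have -> : (z - x = (y - x) + (z - y))%N by lia.
Qed.

End Transport.
Arguments push {A} x z a.

HB.instance Definition _ (A : HMod) x z := GRing.isZmodMorphism.Build _ _ (push x z) (@pushB A x z).

Lemma hmorph0 (A B : HMod) (phi : forall x, Mod A x -> Mod B x) :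
  hmorph phi -> forall x, phi x 0 = 0.
Proof. by case=> phiB _ x; rewrite -(subrr 0) phiB subrr. Qed.

Lemma hmorph_tr (A B : HMod) (phi : forall x, Mod A x -> Mod B x) :
  hmorph phi -> forall x z (a : Mod A x), phi z (tr (Mod A) x z a) = tr (Mod B) x z (phi x a).
Proof.
move=> phi_hmorph x z a; case: (x =P z) => [<-|ne]; first by rewrite !tr_id.
by rewrite !tr_neq // hmorph0.
Qed.

Lemma hmorph_push (A B : HMod) (phi : forall x, Mod A x -> Mod B x) :
  hmorph phi -> forall x z (a : Mod A x), phi z (push x z a) = push x z (phi x a).
Proof. by move=> phi_hmorph x z a; rewrite /push hmorph_tr //; case: phi_hmorph => _ ->. Qed.

Inductive zexpr := ZAtom of nat | ZZero | ZAdd of zexpr & zexpr | ZOpp of zexpr.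

Section ZmoduleReflection.
Variable M : zmodType.

Fixpoint zeval (xs : seq M) (e : zexpr) : M :=
  match e with
  | ZAtom i => xs`_i
  | ZZero => 0
  | ZAdd e1 e2 => zeval xs e1 + zeval xs e2
  | ZOpp e1 => - zeval xs e1
  end.

Fixpoint zcoef (e : zexpr) (i : nat) : int :=
  match e with
  | ZAtom j => (i == j)%:Z
  | ZZero => 0
  | ZAdd e1 e2 => zcoef e1 i + zcoef e2 i
  | ZOpp e1 => - zcoef e1 i
  end.

Lemma zevalE xs e : zeval xs e = \sum_(i < size xs) xs`_i *~ zcoef e i.
Proof.
elim: e => [j||e1 IH1 e2 IH2|e1 IH1] /=.
- case: (ltnP j (size xs)) => [lt_j|le_j].
    rewrite (bigD1 (Ordinal lt_j)) //= eqxx mulr1z big1 ?addr0 // => k ne_kj.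
    rewrite (_ : (k == j :> nat) = false) ?mulr0z //.
    by apply: contraNF ne_kj => /eqP kj; apply/eqP/val_inj.
  rewrite nth_default // big1 // => k _.
  rewrite (_ : (k == j :> nat) = false) ?mulr0z //.
  by apply: negbTE; rewrite neq_ltn (leq_trans (ltn_ord k) le_j).
- by rewrite big1 // => k _; rewrite mulr0z.
- by rewrite IH1 IH2 -big_split; apply: eq_bigr => k _; rewrite mulrzDr.
- by rewrite IH1 -sumrN; apply: eq_bigr => k _; rewrite mulrNz.
Qed.

Lemma zeval_eq xs e1 e2 :
  all (fun i => zcoef e1 i == zcoef e2 i) (iota 0 (size xs)) -> zeval xs e1 = zeval xs e2.
Proof.
move=> /allP coefE; rewrite !zevalE; apply: eq_bigr => k _.
by rewrite (eqP (coefE k _)) // mem_iota ltn_ord.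
Qed.

End ZmoduleReflection.

Ltac zatom_mem x xs :=
  match xs with
  | nil => constr:(false)
  | cons ?y _ => let _ := match goal with _ => unify x y end in constr:(true)
  | cons _ ?t => zatom_mem x t
  end.
Ltac zatom_index x xs :=
  match xs with
  | cons ?y _ => let _ := match goal with _ => unify x y end in constr:(0%N)
  | cons _ ?t => let n := zatom_index x t in constr:(S n)
  end.
Ltac zatoms t xs :=
  lazymatch t with
  | GRing.add ?a ?b => let xs := zatoms a xs in zatoms b xs
  | GRing.opp ?a => zatoms a xs
  | GRing.zero => xs
  | _ => lazymatch zatom_mem t xs with true => xs | false => constr:(cons t xs) end
  end.
Ltac zreify t xs :=
  lazymatch t with
  | GRing.add ?a ?b => let ea := zreify a xs in let eb := zreify b xs in constr:(ZAdd ea eb)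
  | GRing.opp ?a => let ea := zreify a xs in constr:(ZOpp ea)
  | GRing.zero => constr:(ZZero)
  | _ => let i := zatom_index t xs in constr:(ZAtom i)
  end.

(* Proves an equation that holds in every Z-module, i.e. whose two sides have
   the same integer coefficient on each maximal non-additive subterm. *)
Ltac zmodule :=
  lazymatch goal with
  | |- @eq ?T ?l ?r =>
    let xs := zatoms l (@nil T) in
    let xs := zatoms r xs in
    let el := zreify l xs in
    let er := zreify r xs in
    change (zeval xs el = zeval xs er); apply: zeval_eq; by []
  end.

(* Proves [l = r] from [h : E = 0] when [l - r] is [E] or [- E] in every Z-module. *)
Ltac zmodule_by h :=
  apply/eqP; rewrite -subr_eq0; apply/eqP;
  lazymatch type of h with
  | ?E = 0 => first [ transitivity E; [zmodule | exact: h]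
                    | transitivity (- E); [zmodule | by rewrite h oppr0] ]
  end.

Section Evaluation.
Variables (L : BAlg) (A : HMod) (n : nat).
Implicit Types (f g : cochain L A n) (s : bas L) (z : nat).

Lemma evalcE f s z :
  evalc f s z = if insub s is Some b then push (wt L (sval b)) z (f b) else 0.
Proof. by []. Qed.

Lemma evalc_self f (b : cbas L n) : evalc f (sval b) (wt L (sval b)) = f b.
Proof. by rewrite evalcE valK push_id. Qed.

Lemma evalc_ok f s z (s_ok : ok L s && (deg L s == n)) :
  evalc f s z = push (wt L s) z (f (exist _ s s_ok)).
Proof. by rewrite evalcE insubT. Qed.

Lemma evalc_nok f s z : ~~ (ok L s && (deg L s == n)) -> evalc f s z = 0.
Proof. by move=> s_nok; rewrite evalcE insubF //; apply/negbTE. Qed.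

Lemma evalc_ext f g s z : (forall b, f b = g b) -> evalc f s z = evalc g s z.
Proof. by move=> fg; rewrite !evalcE; case: insub => // b; rewrite fg. Qed.

Lemma evalc_eq0 f s z : (forall b, f b = 0) -> evalc f s z = 0.
Proof. by move=> f0; rewrite evalcE; case: insub => // b; rewrite f0 raddf0. Qed.

Definition oppc f : cochain L A n := fun b => - f b.

Lemma evalc_opp f s z : evalc (oppc f) s z = - evalc f s z.
Proof. by rewrite !evalcE; case: insub => [b|]; rewrite ?oppr0 ?raddfN. Qed.

Lemma evalc_add f g s z : evalc (addc f g) s z = evalc f s z + evalc g s z.
Proof. by rewrite !evalcE; case: insub => [b|]; rewrite ?addr0 ?raddfD. Qed.

Lemma evalc_push f s y z :
  (wt L s <= y)%N -> (y <= z)%N -> push y z (evalc f s y) = evalc f s z.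
Proof.
move=> le_sy le_yz; rewrite !evalcE; case: insubP => [b _ sbE|_]; last exact: raddf0.
by apply: push_comp; rewrite // sbE.
Qed.

Lemma evalc_lt f s z : (z < wt L s)%N -> evalc f s z = 0.
Proof. by move=> lt_zs; rewrite evalcE; case: insubP => [b _ sbE|_] //; rewrite push_lt ?sbE. Qed.

Definition cobound_at f s z : Mod A z := \sum_(c <- dif L s) evalc f c.2 z *~ c.1.

Lemma coboundE f (b : cbas L n.+1) : cobound f b = cobound_at f (sval b) (wt L (sval b)).
Proof. by []. Qed.

Lemma cobound_at_push f s y z : all (fun c => wt L c.2 <= y)%N (dif L s) -> (y <= z)%N ->
  push y z (cobound_at f s y) = cobound_at f s z.
Proof.
rewrite /cobound_at; elim: (dif L s) => [|c l IH] /= le_ly le_yz; first by rewrite !big_nil raddf0.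
case/andP: le_ly => le_cy le_ly; by rewrite !big_cons raddfD raddfMz /= IH // evalc_push.
Qed.

Lemma cobound_at_opp f s z : cobound_at (oppc f) s z = - cobound_at f s z.
Proof. by rewrite /cobound_at -sumrN; apply: eq_bigr => c _; rewrite evalc_opp mulNrz. Qed.

End Evaluation.

Lemma evalc_cobound_opp (L : BAlg) (A : HMod) n (f : cochain L A n) s z :
  evalc (cobound (oppc f)) s z = - evalc (cobound f) s z.
Proof. by rewrite -evalc_opp; apply: evalc_ext => b; rewrite /oppc !coboundE cobound_at_opp. Qed.

Lemma evalc_mapc (L : BAlg) (A B : HMod) (phi : forall x, Mod A x -> Mod B x) n
    (f : cochain L A n) s z :
  hmorph phi -> evalc (mapc phi f) s z = phi z (evalc f s z).
Proof.
move=> phi_hmorph; rewrite !evalcE; case: insub => [b|]; last by rewrite hmorph0.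
by rewrite /mapc hmorph_push.
Qed.

(* [H^(n+1)(Hom(L, A))] is naturally the 2-torsion of [A(2)]. *)
Definition cohom_2torsion (L : BAlg) (n : nat) : Prop :=
  exists Theta : forall A : HMod, cochain L A n.+1 -> Mod A 2,
    [/\ forall (A : HMod) (f g : cochain L A n.+1),
          is_cocycle f -> is_cocycle g -> Theta A (addc f g) = Theta A f + Theta A g,
        forall (A : HMod) (f : cochain L A n.+1),
          is_cocycle f -> Theta A f *+ 2 = 0,
        forall (A : HMod) (a : Mod A 2),
          a *+ 2 = 0 -> exists2 f : cochain L A n.+1, is_cocycle f & Theta A f = a,
        forall (A : HMod) (f : cochain L A n.+1),
          is_cocycle f -> (Theta A f = 0 <-> is_coboundary f)
      & forall (A B : HMod) (phi : forall x, Mod A x -> Mod B x), hmorph phi ->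
          forall f : cochain L A n.+1,
          is_cocycle f -> Theta B (mapc phi f) = phi 2%N (Theta A f)].

Definition one_letter_in (L : BAlg) (d : nat) : Prop :=
  forall s : bas (bar L), ok (bar L) s -> deg (bar L) s = d -> exists x, s = [:: x].

Section Desuspension.
Variable L : BAlg.
Local Notation BL := (bar L).
Hypothesis unit_deg0 : forall x, isu L x -> deg L x = 0%N.

Section Coefficients.
Variable A : HMod.

Definition desusp k (f : cochain BL A k.+1) : cochain L A k :=
  fun x => evalc f [:: sval x] (wt L (sval x)).

Definition susp k (F : cochain L A k) : cochain BL A k.+1 := fun b =>
  match sval b as s return Mod A (wt BL s) with
  | [:: x] => evalc F x (wt BL [:: x])
  | _ => 0
  end.

Lemma one_letter_cbas d (b : cbas BL d) : one_letter_in L d -> exists x, sval b = [:: x].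
Proof. by case: b => s /= /andP[s_ok /eqP s_deg] one_letter; apply: one_letter. Qed.

Lemma wt_one x : wt BL [:: x] = wt L x.
Proof. by rewrite /= addn0. Qed.

Lemma ok_deg_one k x : (0 < k)%N ->
  (ok BL [:: x] && (deg BL [:: x] == k.+1)) = (ok L x && (deg L x == k)).
Proof.
move=> k_gt0 /=; rewrite andbT addn0 add1n eqSS.
case x_unit: (isu L x); last by rewrite andbT.
by rewrite unit_deg0 // andbF eq_sym gtn_eqF ?andbF.
Qed.

Lemma evalc_desusp k (f : cochain BL A k.+1) x z :
  (0 < k)%N -> evalc (desusp f) x z = evalc f [:: x] z.
Proof.
move=> k_gt0; case x_ok: (ok L x && (deg L x == k)); last first.
  by rewrite !evalc_nok ?ok_deg_one ?x_ok.
rewrite (evalc_ok _ _ x_ok) /desusp /=.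
case: (leqP (wt L x) z) => [le_xz|lt_zx]; first by rewrite evalc_push ?wt_one.
by rewrite push_lt // evalc_lt ?wt_one.
Qed.

Lemma evalc_susp k (F : cochain L A k) x z :
  (0 < k)%N -> evalc (susp F) [:: x] z = evalc F x z.
Proof.
move=> k_gt0; case x_ok: (ok L x && (deg L x == k)); last first.
  by rewrite !evalc_nok ?ok_deg_one ?x_ok.
have sx_ok : ok BL [:: x] && (deg BL [:: x] == k.+1) by rewrite ok_deg_one.
rewrite (evalc_ok _ _ sx_ok) /susp /=.
rewrite addn0; case: (leqP (wt L x) z) => [le_xz|lt_zx]; first by rewrite evalc_push.
by rewrite push_lt // evalc_lt.
Qed.

Lemma desuspK k (F : cochain L A k) : (0 < k)%N -> desusp (susp F) = F.
Proof.
move=> k_gt0; apply: functional_extensionality_dep => x.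
by rewrite /desusp evalc_susp // evalc_self.
Qed.

Lemma desusp_add k (f g : cochain BL A k.+1) : desusp (addc f g) = addc (desusp f) (desusp g).
Proof. by apply: functional_extensionality_dep => x; rewrite /desusp /addc evalc_add. Qed.

Lemma dif_one x : dif BL [:: x] =
  [seq (- sgn 0 * c.1, [:: c.2]) | c <- nonunit (dif L x)] ++
  [:: (aug L x, [::]); (sgn (epre [:: x]) * aug L x, [::])].
Proof. by rewrite /= /bar_dif /= cats0. Qed.

(* The augmentation terms of [d[x]] live on the empty word, where a cochain of
   positive degree vanishes; unit letters are dropped on both sides. *)
Lemma cobound_at_one k (f : cochain BL A k.+1) x z :
  (0 < k)%N -> cobound_at f [:: x] z = - cobound_at (desusp f) x z.
Proof.
move=> k_gt0; rewrite /cobound_at dif_one big_cat /= big_map !big_cons big_nil.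
rewrite !(evalc_nok f (s := [::])) // mul0rz !addr0.
rewrite /nonunit big_filter big_mkcond /= !mul0rz !addr0 -sumrN; apply: eq_bigr => c _.
case: ifP => [_|/negbFE c_unit]; first by rewrite evalc_desusp // /sgn expr0 mulN1r mulrNz.
rewrite (evalc_nok (desusp f)) ?mul0rz ?oppr0 //.
by rewrite unit_deg0 // andbC; case: eqP => // k0; rewrite -k0 in k_gt0.
Qed.

Lemma evalc_cobound_one k (f : cochain BL A k.+1) x z :
  (0 < k)%N -> evalc (cobound f) [:: x] z = - evalc (cobound (desusp f)) x z.
Proof.
move=> k_gt0; case x_ok: (ok L x && (deg L x == k.+1)); last first.
  by rewrite !evalc_nok ?oppr0 ?ok_deg_one ?x_ok.
have sx_ok : ok BL [:: x] && (deg BL [:: x] == k.+2) by rewrite ok_deg_one.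
rewrite (evalc_ok _ _ sx_ok) (evalc_ok _ _ x_ok) !coboundE /= cobound_at_one // raddfN /=.
by rewrite addn0.
Qed.

Lemma cocycle_desusp k (f : cochain BL A k.+1) :
  (0 < k)%N -> one_letter_in L k.+2 -> is_cocycle f <-> is_cocycle (desusp f).
Proof.
move=> k_gt0 one_letter; split=> f_cocycle b.
  rewrite -evalc_self -(opprK (evalc _ _ _)) -evalc_cobound_one //.
  by rewrite evalc_eq0 ?oppr0.
rewrite -evalc_self; have [x ->] := one_letter_cbas b one_letter.
by rewrite evalc_cobound_one // evalc_eq0 ?oppr0.
Qed.

Lemma coboundary_desusp k (f : cochain BL A k.+2) :
  (0 < k)%N -> one_letter_in L k.+2 -> is_coboundary f <-> is_coboundary (desusp f).
Proof.
move=> k_gt0 one_letter; split=> -[g fE].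
  exists (oppc (desusp g)) => x.
  rewrite -[RHS]evalc_self evalc_cobound_opp -evalc_cobound_one //.
  exact: evalc_ext.
exists (susp (oppc g)) => b.
rewrite -evalc_self -[RHS]evalc_self; have [x ->] := one_letter_cbas b one_letter.
rewrite evalc_cobound_one // -evalc_desusp // (evalc_ext _ _ fE) desuspK //.
by rewrite evalc_cobound_opp opprK.
Qed.

End Coefficients.

Lemma desusp_mapc (A B : HMod) (phi : forall x, Mod A x -> Mod B x) k (f : cochain BL A k.+1) :
  hmorph phi -> desusp (mapc phi f) = mapc phi (desusp f).
Proof.
by move=> phi_hmorph; apply: functional_extensionality_dep => x; rewrite /desusp /mapc evalc_mapc.
Qed.

Lemma cohom_2torsion_bar n : one_letter_in L n.+3 -> one_letter_in L n.+4 ->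
  cohom_2torsion L n.+1 -> cohom_2torsion BL n.+2.
Proof.
move=> one_letter3 one_letter4 [Theta [ThetaD Theta2 Theta_surj Theta_ker Theta_nat]].
have cocycleE A (f : cochain BL A n.+3) : is_cocycle f -> is_cocycle (desusp f).
  by case: (cocycle_desusp f).
exists (fun A f => Theta A (desusp f)); split.
- by move=> A f g f_cocycle g_cocycle; rewrite desusp_add ThetaD //; apply: cocycleE.
- by move=> A f f_cocycle; rewrite Theta2 //; apply: cocycleE.
- move=> A a a2; have [F F_cocycle <-] := Theta_surj A a a2.
  exists (susp F); last by rewrite desuspK.
  by apply/cocycle_desusp; rewrite ?desuspK.
- move=> A f f_cocycle; rewrite Theta_ker; last exact: cocycleE.
  by split=> /coboundary_desusp; apply.
- by move=> A B phi phi_hmorph f f_cocycle; rewrite desusp_mapc // Theta_nat //; apply: cocycleE.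
Qed.

End Desuspension.

Lemma bar_ok_cons (L : BAlg) x s :
  ok (bar L) (x :: s) = [&& ok L x, ~~ isu L x & ok (bar L) s].
Proof. by rewrite /= andbA. Qed.

Lemma bar_deg_cons (L : BAlg) x s : deg (bar L) (x :: s) = (deg L x + deg (bar L) s).+1.
Proof. by rewrite /=; lia. Qed.

Lemma bar_deg_ge (L : BAlg) m s :
  (forall x, ok L x -> ~~ isu L x -> (m <= deg L x)%N) ->
  ok (bar L) s -> (size s * m.+1 <= deg (bar L) s)%N.
Proof.
move=> deg_ge; elim: s => [|x s IH] //= /andP[/andP[x_ok x_nunit] s_ok].
have := deg_ge x x_ok x_nunit; have := IH s_ok => /=.
by rewrite mulSn; move: (size s * m.+1)%N => q; lia.
Qed.

Lemma BrZ_deg_ge k x : ok (BrZ k) x -> ~~ isu (BrZ k) x -> (k <= deg (BrZ k) x)%N.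
Proof.
elim: k x => [|k IH] // [|y t] //= /andP[/andP[y_ok y_nunit] t_ok] _.
by have := IH y y_ok y_nunit; lia.
Qed.

Lemma BrZ_unit_deg0 k x : isu (BrZ k.+1) x -> deg (BrZ k.+1) x = 0%N.
Proof. by case: x. Qed.

Lemma BrZ_one_letter r d : (0 < d <= r.*2.+1)%N -> one_letter_in (BrZ r) d.
Proof.
move=> d_range s s_ok s_deg; have := bar_deg_ge (@BrZ_deg_ge r) s_ok.
case: s s_ok s_deg => [|x [|y t]] s_ok s_deg; first by move: d_range; rewrite -s_deg.
  by exists x.
by rewrite s_deg /=; lia.
Qed.

(* Basis elements of [B^3(Z C_oo)] in degrees 4, 5 and 6; a name lists the lengths
   of the innermost bar words, so that [g21 a b c] is the one-letter word
   [[[a|b]|[c]]] and [g1_1 a b] the two-letter word [[[a]] | [[b]]]. *)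
Definition g2 (a b : nat) : bas (BrZ 3) := [:: [:: [:: a; b]]].
Definition g3 (a b c : nat) : bas (BrZ 3) := [:: [:: [:: a; b; c]]].
Definition g11 (a b : nat) : bas (BrZ 3) := [:: [:: [:: a]; [:: b]]].
Definition g4 (a b c d : nat) : bas (BrZ 3) := [:: [:: [:: a; b; c; d]]].
Definition g21 (a b c : nat) : bas (BrZ 3) := [:: [:: [:: a; b]; [:: c]]].
Definition g12 (a b c : nat) : bas (BrZ 3) := [:: [:: [:: a]; [:: b; c]]].
Definition g1_1 (a b : nat) : bas (BrZ 3) := [:: [:: [:: a]]; [:: [:: b]]].

Lemma eqn_add0F a b : (0 < a)%N -> eqn (a + b) 0 = false.
Proof. by case: a. Qed.

Lemma dif_g3 a b c : (0 < a)%N -> (0 < b)%N -> (0 < c)%N ->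
  dif (BrZ 3) (g3 a b c) = [:: (1, g2 b c); (-1, g2 (a + b) c); (1, g2 a (b + c));
     (-1, g2 a b); (0, [::]); (0, [::])].
Proof. by move=> a_gt0 b_gt0 c_gt0; cbn; rewrite !eqn_add0F. Qed.

Lemma dif_g11 a b : (0 < a)%N -> (0 < b)%N ->
  dif (BrZ 3) (g11 a b) = [:: (0, [:: [:: [:: b]]]); (-1, g2 a b); (1, g2 b a);
     (0, [:: [:: [:: a]]]); (0, [::]); (0, [::])].
Proof. by move=> a_gt0 b_gt0; cbn. Qed.

Lemma dif_g4 a b c d : (0 < a)%N -> (0 < b)%N -> (0 < c)%N -> (0 < d)%N ->
  dif (BrZ 3) (g4 a b c d) = [:: (1, g3 b c d); (-1, g3 (a + b) c d); (1, g3 a (b + c) d);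
     (-1, g3 a b (c + d)); (1, g3 a b c); (0, [::]); (0, [::])].
Proof. by move=> a_gt0 b_gt0 c_gt0 d_gt0; cbn; rewrite !eqn_add0F. Qed.

Lemma dif_g21 a b c : (0 < a)%N -> (0 < b)%N -> (0 < c)%N ->
  dif (BrZ 3) (g21 a b c) = [:: (1, g11 b c); (-1, g11 (a + b) c); (1, g11 a c);
     (0, [:: [:: [:: c]]]); (1, g3 a b c); (-1, g3 a c b); (1, g3 c a b);
     (0, [:: [:: [:: a; b]]]); (0, [::]); (0, [::])].
Proof. by move=> a_gt0 b_gt0 c_gt0; cbn; rewrite !eqn_add0F. Qed.

Lemma dif_g12 a b c : (0 < a)%N -> (0 < b)%N -> (0 < c)%N ->
  dif (BrZ 3) (g12 a b c) = [:: (1, g11 a c); (-1, g11 a (b + c)); (1, g11 a b);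
     (0, [:: [:: [:: b; c]]]); (-1, g3 a b c); (1, g3 b a c); (-1, g3 b c a);
     (0, [:: [:: [:: a]]]); (0, [::]); (0, [::])].
Proof. by move=> a_gt0 b_gt0 c_gt0; cbn; rewrite !eqn_add0F. Qed.

Lemma dif_g1_1 a b : (0 < a)%N -> (0 < b)%N ->
  dif (BrZ 3) (g1_1 a b) = [:: (0, [:: [:: [:: b]]]); (-1, g11 a b); (-1, g11 b a);
     (0, [:: [:: [:: a]]])].
Proof. by move=> a_gt0 b_gt0; cbn. Qed.

Lemma BrZ1_degE (w : bas (BrZ 1)) : deg (BrZ 1) w = size w.
Proof. by rewrite /= (_ : sumn _ = 0%N) ?addn0 //; elim: w. Qed.

Lemma BrZ1_okE (w : bas (BrZ 1)) : ok (BrZ 1) w = all (fun v => 0 < v)%N w.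
Proof. by elim: w => //= v w ->; case: v. Qed.

Lemma BrZ2_degE (x : bas (BrZ 2)) : deg (BrZ 2) x = (size x + sumn [seq size w | w <- x])%N.
Proof. by rewrite /= -(eq_map BrZ1_degE). Qed.

Lemma BrZ2_okE (x : bas (BrZ 2)) :
  ok (BrZ 2) x = all (fun w => all (fun v => 0 < v)%N w && ~~ nilp w) x.
Proof. by apply: eq_all => w; rewrite /= -BrZ1_okE. Qed.

Lemma BrZ2_size (x : bas (BrZ 2)) : ok (BrZ 2) x -> (size x * 2 <= deg (BrZ 2) x)%N.
Proof. exact: (bar_deg_ge (@BrZ_deg_ge 1)). Qed.

Lemma BrZ2_deg2_cases (x : bas (BrZ 2)) : ok (BrZ 2) x -> deg (BrZ 2) x = 2%N ->
  exists2 a, (0 < a)%N & x = [:: [:: a]].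
Proof.
move=> x_ok x_deg; have := BrZ2_size x_ok; rewrite x_deg.
move: x_ok x_deg; rewrite BrZ2_okE BrZ2_degE.
case: x => [|[|a [|a' w]] [|w2 x]] //=; try lia.
by rewrite !andbT => a_gt0 _ _; exists a.
Qed.

Lemma BrZ2_deg4_cases (x : bas (BrZ 2)) : ok (BrZ 2) x -> deg (BrZ 2) x = 4%N ->
  (exists a b c, [/\ (0 < a)%N, (0 < b)%N, (0 < c)%N & x = [:: [:: a; b; c]]]) \/
  (exists a b, [/\ (0 < a)%N, (0 < b)%N & x = [:: [:: a]; [:: b]]]).
Proof.
move=> x_ok x_deg; have := BrZ2_size x_ok; rewrite x_deg.
move: x_ok x_deg; rewrite BrZ2_okE BrZ2_degE.
case: x => [|w1 [|w2 [|w3 x]]] //=; try lia.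
  case: w1 => [|a [|b [|c [|d w]]]] //=; try lia.
  by rewrite !andbT => /and3P[a_gt0 b_gt0 c_gt0] _ _; left; exists a, b, c.
case: w1 => [|a [|a' w1]] //=; case: w2 => [|b [|b' w2]] //=; try lia.
by rewrite !andbT => /andP[a_gt0 b_gt0] _ _; right; exists a, b.
Qed.

Lemma BrZ2_deg5_cases (x : bas (BrZ 2)) : ok (BrZ 2) x -> deg (BrZ 2) x = 5%N ->
  [\/ exists a b c d, [/\ (0 < a)%N, (0 < b)%N, (0 < c)%N, (0 < d)%N & x = [:: [:: a; b; c; d]]],
      exists a b c, [/\ (0 < a)%N, (0 < b)%N, (0 < c)%N & x = [:: [:: a; b]; [:: c]]] |
      exists a b c, [/\ (0 < a)%N, (0 < b)%N, (0 < c)%N & x = [:: [:: a]; [:: b; c]]]].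
Proof.
move=> x_ok x_deg; have := BrZ2_size x_ok; rewrite x_deg.
move: x_ok x_deg; rewrite BrZ2_okE BrZ2_degE.
case: x => [|w1 [|w2 [|w3 x]]] //=; try lia.
  case: w1 => [|a [|b [|c [|d [|e w]]]]] //=; try lia.
  by rewrite !andbT => /and4P[a_gt0 b_gt0 c_gt0 d_gt0] _ _; apply: Or31; exists a, b, c, d.
case: w1 => [|a [|a' [|a'' w1]]] //=; case: w2 => [|b [|b' [|b'' w2]]] //=; try lia.
  by move=> pos _ _; apply: Or33; exists a, b, b'; split => //; move: pos; lia.
by move=> pos _ _; apply: Or32; exists a, a', b; split => //; move: pos; lia.
Qed.

Lemma BrZ3_deg5_cases (s : bas (BrZ 3)) : ok (BrZ 3) s -> deg (BrZ 3) s = 5%N ->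
  (exists a b c, [/\ (0 < a)%N, (0 < b)%N, (0 < c)%N & s = g3 a b c]) \/
  (exists a b, [/\ (0 < a)%N, (0 < b)%N & s = g11 a b]).
Proof.
move=> s_ok s_deg; have [x sx] := @BrZ_one_letter 2 5 isT s s_ok s_deg.
move: s_ok s_deg; rewrite sx bar_ok_cons bar_deg_cons andbT addn0 => /andP[x_ok _] /succn_inj x_deg.
case: (BrZ2_deg4_cases x_ok x_deg) => [[a [b [c [a_gt0 b_gt0 c_gt0 ->]]]]|[a [b [a_gt0 b_gt0 ->]]]].
  by left; exists a, b, c.
by right; exists a, b.
Qed.

Lemma BrZ3_deg6_cases (s : bas (BrZ 3)) : ok (BrZ 3) s -> deg (BrZ 3) s = 6%N ->
  [\/ exists a b c d, [/\ (0 < a)%N, (0 < b)%N, (0 < c)%N, (0 < d)%N & s = g4 a b c d],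
      exists a b c, [/\ (0 < a)%N, (0 < b)%N, (0 < c)%N & s = g21 a b c],
      exists a b c, [/\ (0 < a)%N, (0 < b)%N, (0 < c)%N & s = g12 a b c] |
      exists a b, [/\ (0 < a)%N, (0 < b)%N & s = g1_1 a b]].
Proof.
move=> s_ok s_deg; have := bar_deg_ge (@BrZ_deg_ge 2) s_ok; rewrite s_deg.
case: s s_ok s_deg => [|x [|y [|z s]]]; try by move=> /= *; lia.
  rewrite bar_ok_cons bar_deg_cons andbT addn0 => /andP[x_ok _] /succn_inj x_deg _.
  case: (BrZ2_deg5_cases x_ok x_deg)
    => [[a [b [c [d [? ? ? ? ->]]]]]|[a [b [c [? ? ? ->]]]]|[a [b [c [? ? ? ->]]]]].
  - by apply: Or41; exists a, b, c, d.
  - by apply: Or42; exists a, b, c.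
  - by apply: Or43; exists a, b, c.
rewrite !bar_ok_cons !bar_deg_cons andbT addn0.
move=> /and4P[x_ok x_nunit y_ok y_nunit] /succn_inj s_deg _.
change (deg (BrZ 2) x + (deg (BrZ 2) y).+1 = 5)%N in s_deg.
have [/BrZ2_deg2_cases x_deg2 /BrZ2_deg2_cases y_deg2] : deg (BrZ 2) x = 2%N /\ deg (BrZ 2) y = 2%N.
  move: s_deg (@BrZ_deg_ge 2 x x_ok x_nunit) (@BrZ_deg_ge 2 y y_ok y_nunit).
  by move: (deg (BrZ 2) x) (deg (BrZ 2) y) => p q; lia.
case: (x_deg2 x_ok) => a a_gt0 ->; case: (y_deg2 y_ok) => b b_gt0 ->.
by apply: Or44; exists a, b.
Qed.

Section DegreeFive.
Variable A : HMod.
Local Notation cochain5 := (cochain (BrZ 3) A 5).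

Local Ltac weights := rewrite /= ?addn0; try lia.
Local Ltac expand_cobound dif_g :=
  rewrite /cobound_at dif_g // !big_cons big_nil /= ?mulr1z ?mulrN1z ?mulr0z.

Section Cocycle.
Variable f : cochain5.
Hypothesis f_cocycle : is_cocycle f.

Lemma cobound_at_cocycle s z : ok (BrZ 3) s && (deg (BrZ 3) s == 6%N) ->
  all (fun c => wt (BrZ 3) c.2 <= wt (BrZ 3) s)%N (dif (BrZ 3) s) -> (wt (BrZ 3) s <= z)%N ->
  cobound_at f s z = 0.
Proof.
move=> s_ok dif_wt le_sz; have := f_cocycle (exist _ s s_ok); rewrite coboundE /= => f_s.
by rewrite -(cobound_at_push _ dif_wt le_sz) f_s raddf0.
Qed.

Lemma cocycle_g4 a b c d z : (0 < a)%N -> (0 < b)%N -> (0 < c)%N -> (0 < d)%N ->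
  (a + b + c + d <= z)%N ->
  evalc f (g3 b c d) z - evalc f (g3 (a + b) c d) z + evalc f (g3 a (b + c) d) z
  - evalc f (g3 a b (c + d)) z + evalc f (g3 a b c) z = 0.
Proof.
move=> a_gt0 b_gt0 c_gt0 d_gt0 le_z.
rewrite -(@cobound_at_cocycle (g4 a b c d) z); rewrite ?dif_g4 //; try weights.
by expand_cobound dif_g4; zmodule.
Qed.

Lemma cocycle_g21 a b c z : (0 < a)%N -> (0 < b)%N -> (0 < c)%N -> (a + b + c <= z)%N ->
  evalc f (g11 b c) z - evalc f (g11 (a + b) c) z + evalc f (g11 a c) z
  + evalc f (g3 a b c) z - evalc f (g3 a c b) z + evalc f (g3 c a b) z = 0.
Proof.
move=> a_gt0 b_gt0 c_gt0 le_z.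
rewrite -(@cobound_at_cocycle (g21 a b c) z); rewrite ?dif_g21 //; try weights.
by expand_cobound dif_g21; zmodule.
Qed.

Lemma cocycle_g12 a b c z : (0 < a)%N -> (0 < b)%N -> (0 < c)%N -> (a + b + c <= z)%N ->
  evalc f (g11 a c) z - evalc f (g11 a (b + c)) z + evalc f (g11 a b) z
  - evalc f (g3 a b c) z + evalc f (g3 b a c) z - evalc f (g3 b c a) z = 0.
Proof.
move=> a_gt0 b_gt0 c_gt0 le_z.
rewrite -(@cobound_at_cocycle (g12 a b c) z); rewrite ?dif_g12 //; try weights.
by expand_cobound dif_g12; zmodule.
Qed.

Lemma cocycle_g1_1 a b z : (0 < a)%N -> (0 < b)%N -> (a + b <= z)%N ->
  evalc f (g11 a b) z + evalc f (g11 b a) z = 0.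
Proof.
move=> a_gt0 b_gt0 le_z; apply: oppr_inj; rewrite oppr0.
rewrite -(@cobound_at_cocycle (g1_1 a b) z); rewrite ?dif_g1_1 //; try weights.
by expand_cobound dif_g1_1; zmodule.
Qed.

(* By [cocycle_g4], [f] restricted to the [g3] is a 3-cocycle of the monoid
   [(nat, +)], hence the coboundary of [- primitive] ([evalc_g3]), obtained by
   summing along the first entry. *)
Definition primitive a b z : Mod A z := \sum_(1 <= k < a) evalc f (g3 1 k b) z.

Lemma primitive1 b z : primitive 1 b z = 0.
Proof. by rewrite /primitive big_geq. Qed.

Lemma primitiveS a b z : (0 < a)%N ->
  primitive a.+1 b z = primitive a b z + evalc f (g3 1 a b) z.
Proof. by move=> a_gt0; rewrite /primitive big_nat_recr. Qed.

Lemma evalc_g3 a b c z : (0 < a)%N -> (0 < b)%N -> (0 < c)%N -> (a + b + c <= z)%N ->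
  evalc f (g3 a b c) z =
    - primitive b c z + primitive (a + b) c z - primitive a (b + c) z + primitive a b z.
Proof.
case: a => // a _; elim: a b c => [|a IH] b c b_gt0 c_gt0 le_z.
  by rewrite !primitive1 add1n primitiveS //; zmodule.
have := @cocycle_g4 1 a.+1 b c z isT isT b_gt0 c_gt0 ltac:(lia).
rewrite add1n IH //; try lia.
rewrite addSn (@primitiveS (a.+1 + b)) ?(@primitiveS a.+1 (b + c)) ?(@primitiveS a.+1 b) //;
  try lia.
by move=> f_g4; zmodule_by f_g4.
Qed.

(* [defect] is the part of [f] on the [g11] not accounted for by [primitive]; it
   is biadditive, so it is determined by its value at [(1, 1)]. *)
Definition defect a b z : Mod A z := evalc f (g11 a b) z - primitive a b z + primitive b a z.

Lemma defect_addl a b c z : (0 < a)%N -> (0 < b)%N -> (0 < c)%N -> (a + b + c <= z)%N ->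
  defect (a + b) c z = defect a c z + defect b c z.
Proof.
move=> a_gt0 b_gt0 c_gt0 le_z; have := cocycle_g21 a_gt0 b_gt0 c_gt0 le_z.
rewrite (@evalc_g3 a b c) // (@evalc_g3 a c b) // ?(@evalc_g3 c a b) //; try lia.
by rewrite (addnC c a) (addnC c b) /defect => f_g21; zmodule_by f_g21.
Qed.

Lemma defect_addr a b c z : (0 < a)%N -> (0 < b)%N -> (0 < c)%N -> (a + b + c <= z)%N ->
  defect a (b + c) z = defect a b z + defect a c z.
Proof.
move=> a_gt0 b_gt0 c_gt0 le_z; have := cocycle_g12 a_gt0 b_gt0 c_gt0 le_z.
rewrite (@evalc_g3 a b c) // (@evalc_g3 b a c) // ?(@evalc_g3 b c a) //; try lia.
by rewrite (addnC b a) (addnC c a) /defect => f_g12; zmodule_by f_g12.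
Qed.

Lemma defect_eq0 : evalc f (g11 1 1) 2 = 0 ->
  forall a b z, (0 < a)%N -> (0 < b)%N -> (a + b <= z)%N -> defect a b z = 0.
Proof.
move=> f11 a b z a_gt0 b_gt0 le_z.
have defect11 w : (2 <= w)%N -> defect 1 1 w = 0.
  by move=> le_2w; rewrite /defect subrK -(@evalc_push _ _ _ f (g11 1 1) 2 w) // f11 raddf0.
have defect1 c w : (0 < c)%N -> (1 + c <= w)%N -> defect 1 c w = 0.
  elim: c => // c IH _; case: c IH => [_|c IH] le_w; first exact: defect11.
  by rewrite -[c.+2]addn1 defect_addr ?IH ?defect11 ?addr0 //; lia.
elim: a a_gt0 le_z => // a IH _; case: a IH => [_|a IH] le_z; first exact: defect1.
by rewrite -[a.+2]addn1 defect_addl ?IH ?defect1 ?addr0 //; lia.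
Qed.

End Cocycle.

Definition primitive_cochain (f : cochain5) : cochain (BrZ 3) A 4 := fun b =>
  match sval b as s return Mod A (wt (BrZ 3) s) with
  | [:: [:: [:: x; y]]] => - primitive f x y (wt (BrZ 3) (g2 x y))
  | _ => 0
  end.

Lemma evalc_primitive_cochain (f : cochain5) a b z : (0 < a)%N -> (0 < b)%N -> (a + b <= z)%N ->
  evalc (primitive_cochain f) (g2 a b) z = - primitive f a b z.
Proof.
move=> a_gt0 b_gt0 le_z.
have g2_ok : ok (BrZ 3) (g2 a b) && (deg (BrZ 3) (g2 a b) == 4%N) by weights.
rewrite (evalc_ok _ _ g2_ok) /primitive_cochain /= raddfN /primitive raddf_sum /=; congr (- _).
by apply: eq_big_nat => k /andP[k_gt0 lt_ka]; apply: evalc_push; weights.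
Qed.

Lemma cobound_primitive_cochain (f : cochain5) : is_cocycle f -> evalc f (g11 1 1) 2 = 0 ->
  forall b, f b = cobound (primitive_cochain f) b.
Proof.
move=> f_cocycle f11 b; rewrite -[LHS]evalc_self coboundE.
case: b => s /= /andP[s_ok /eqP s_deg].
case: (BrZ3_deg5_cases s_ok s_deg) => [[a [b [c [a_gt0 b_gt0 c_gt0 ->]]]]|[a [b [a_gt0 b_gt0 ->]]]].
  expand_cobound dif_g3; rewrite !evalc_primitive_cochain ?evalc_g3 //; try weights.
  by zmodule.
expand_cobound dif_g11; rewrite !evalc_primitive_cochain //; try weights.
have := defect_eq0 f_cocycle f11 a_gt0 b_gt0 (leqnn (a + b)).
by rewrite /defect => f_ab; zmodule_by f_ab.
Qed.

Lemma cobound_at_g11_diag (g : cochain (BrZ 3) A 4) a z : (0 < a)%N ->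
  cobound_at g (g11 a a) z = 0.
Proof. by move=> a_gt0; expand_cobound dif_g11; zmodule. Qed.

(* [g11 p q |-> p q a]; it is a cocycle exactly when [2 a = 0], because of the
   two-letter words [g1_1 p q]. *)
Definition bilinear_cochain (a : Mod A 2) : cochain5 := fun b =>
  match sval b as s return Mod A (wt (BrZ 3) s) with
  | [:: [:: [:: p]; [:: q]]] => push 2 (wt (BrZ 3) (g11 p q)) a *+ (p * q)
  | _ => 0
  end.

Lemma evalc_bilinear_g11 a p q z : (0 < p)%N -> (0 < q)%N -> (p + q <= z)%N ->
  evalc (bilinear_cochain a) (g11 p q) z = push 2 z a *+ (p * q).
Proof.
move=> p_gt0 q_gt0 le_z.
have g11_ok : ok (BrZ 3) (g11 p q) && (deg (BrZ 3) (g11 p q) == 5%N) by weights.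
by rewrite (evalc_ok _ _ g11_ok) /bilinear_cochain /= raddfMn /= push_comp //; weights.
Qed.

Lemma evalc_bilinear_g3 a p q r z : evalc (bilinear_cochain a) (g3 p q r) z = 0.
Proof.
rewrite evalcE; case: insubP => [[s s_ok] _ /= sE|_] //.
by rewrite /bilinear_cochain; subst s; rewrite raddf0.
Qed.

Lemma bilinear_cocycle a : a *+ 2 = 0 -> is_cocycle (bilinear_cochain a).
Proof.
move=> a2 [s s_ok]; rewrite coboundE /=; case/andP: (s_ok) => s_ok' /eqP s_deg.
case: (BrZ3_deg6_cases s_ok' s_deg)
  => [[p [q [r [t [? ? ? ? ->]]]]]|[p [q [r [? ? ? ->]]]]|[p [q [r [? ? ? ->]]]]|[p [q [? ? ->]]]].
- by expand_cobound dif_g4; rewrite !evalc_bilinear_g3; zmodule.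
- expand_cobound dif_g21; rewrite !evalc_bilinear_g3 !evalc_bilinear_g11 //; try weights.
  by rewrite mulnDl mulrnDr; zmodule.
- expand_cobound dif_g12; rewrite !evalc_bilinear_g3 !evalc_bilinear_g11 //; try weights.
  by rewrite mulnDr mulrnDr; zmodule.
expand_cobound dif_g1_1; rewrite !evalc_bilinear_g11 //; try weights.
have push_a2 : push 2 (p + q) a *+ 2 = 0 by rewrite -raddfMn /= a2 raddf0.
by rewrite mulnC add0r !addr0 -opprD -mulr2n mulrnAC push_a2 mul0rn oppr0.
Qed.

End DegreeFive.

Lemma cohom_2torsion_BrZ3 : cohom_2torsion (BrZ 3) 4.
Proof.
exists (fun A f => evalc f (g11 1 1) 2); split.
- by move=> A f g _ _; apply: evalc_add.
- by move=> A f f_cocycle; rewrite mulr2n; apply: cocycle_g1_1.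
- move=> A a a2; exists (bilinear_cochain a); first exact: bilinear_cocycle.
  by rewrite evalc_bilinear_g11 // push_id mulr1n.
- move=> A f f_cocycle; split=> [f11|[g fE]].
    by exists (primitive_cochain f); apply: cobound_primitive_cochain.
  have g11_ok : ok (BrZ 3) (g11 1 1) && (deg (BrZ 3) (g11 1 1) == 5%N) by [].
  by rewrite (evalc_ext _ _ fE) (evalc_ok _ _ g11_ok) coboundE cobound_at_g11_diag ?raddf0.
- by move=> A B phi phi_hmorph f _; apply: evalc_mapc.
Qed.

Lemma cohom_2torsion_BrZ r : (3 <= r)%N -> cohom_2torsion (BrZ r) r.+1.
Proof.
elim: r => // -[//|r] IH; rewrite leq_eqVlt => /predU1P[<-|lt3r].
  exact: cohom_2torsion_BrZ3.
apply: (cohom_2torsion_bar (@BrZ_unit_deg0 r)); try (apply: BrZ_one_letter; lia).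
exact: IH.
Qed.

Theorem proposition7p14 (r : nat) : (3 <= r)%N ->
  exists Theta : forall A : HMod, cochain (BrZ r) A r.+2 -> Mod A 2,
    [/\ forall (A : HMod) (f g : cochain (BrZ r) A r.+2),
          is_cocycle f -> is_cocycle g -> Theta A (addc f g) = Theta A f + Theta A g,
        forall (A : HMod) (f : cochain (BrZ r) A r.+2),
          is_cocycle f -> Theta A f *+ 2 = 0,
        forall (A : HMod) (a : Mod A 2),
          a *+ 2 = 0 -> exists2 f : cochain (BrZ r) A r.+2, is_cocycle f & Theta A f = a,
        forall (A : HMod) (f : cochain (BrZ r) A r.+2),
          is_cocycle f -> (Theta A f = 0 <-> is_coboundary f)
      & forall (A B : HMod) (phi : forall x, Mod A x -> Mod B x), hmorph phi ->
          forall f : cochain (BrZ r) A r.+2,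
          is_cocycle f -> Theta B (mapc phi f) = phi 2%N (Theta A f)].
Proof. exact: cohom_2torsion_BrZ. Qed.
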